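(* Let $A$ be a double Poisson algebra and $(M,\{\!\{-,-\}\!\}_M)$ a double Poisson $A$-bimodule. Then the brackets $\{-,-\}_M=\mu_M\circ\{\!\{-,-\}\!\}_M$ and $\{-,-\}_{M,\natural}=\natural\circ\{-,-\}_M$ make $M$ and $M_\natural=M/[A,M]$, respectively, into Lie modules over the Lie algebra $(A_\natural,\{-,-\})$, where $A_\natural=A/[A,A]$ and $\{-,-\}=\mu\circ\{\!\{-,-\}\!\}$.
   Context: $A$ is a unital associative $k$-algebra and $\mu$ its multiplication. A double bracket on $A$ is a bilinear map $\{\!\{-,-\}\!\}:A\times A\to A\otimes A$ with $\{\!\{a,b\}\!\}=-\{\!\{b,a\}\!\}^\circ$ ($(u\otimes v)^\circ=v\otimes u$) and $\{\!\{a,bc\}\!\}=b\{\!\{a,c\}\!\}+\{\!\{a,b\}\!\}c$ for the outer bimodule structure $b(a_1\otimes a_2)c=ba_1\otimes a_2c$; the inner structure is $b*(a_1\otimes a_2)*c=a_1c\otimes ba_2$. With $\{\!\{a,b_1\otimes\cdots\otimes b_n\}\!\}_L=\{\!\{a,b_1\}\!\}\otimes b_2\otimes\cdots\otimes b_n$ and $\sigma_s(b_1\otimes\cdots\otimes b_n)=b_{s^{-1}(1)}\otimes\cdots\otimes b_{s^{-1}(n)}$, $A$ is a double Poisson algebra if $\{\!\{a,\{\!\{b,c\}\!\}\}\!\}_L+\sigma_{(123)}\{\!\{b,\{\!\{c,a\}\!\}\}\!\}_L+\sigma_{(132)}\{\!\{c,\{\!\{a,b\}\!\}\}\!\}_L=0$;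 then $\{-,-\}$ induces a Lie bracket on $A_\natural$. For an $A$-bimodule $M$, a double Poisson bracket on $M$ is a bilinear $\{\!\{-,-\}\!\}_M:A\times M\to(A\otimes M)\oplus(M\otimes A)$ with (i) $\{\!\{a,bm\}\!\}_M=\{\!\{a,b\}\!\}m+b\{\!\{a,m\}\!\}_M$, $\{\!\{a,mb\}\!\}_M=\{\!\{a,m\}\!\}_Mb+m\{\!\{a,b\}\!\}$; (ii) $\{\!\{ab,m\}\!\}_M=a*\{\!\{b,m\}\!\}_M+\{\!\{a,m\}\!\}_M*b$. Put $\{\!\{m,b\}\!\}_M=-(\{\!\{b,m\}\!\}_M)^\circ$; if $\{\!\{b,m\}\!\}_M=(b_1\otimes m_1)\oplus(m_2\otimes b_2)$ set $\{\!\{a,\{\!\{b,m\}\!\}_M\}\!\}_L=(\{\!\{a,b_1\}\!\}\otimes m_1)\oplus(\{\!\{a,m_2\}\!\}_M\otimes b_2)$, and $\{\!\{m,\{\!\{a,b\}\!\}\}\!\}_L=\{\!\{m,\{\!\{a,b\}\!\}'\}\!\}_M\otimes\{\!\{a,b\}\!\}''$. $M$ is a double Poisson $A$-bimodule if also (iii) $\{\!\{a,\{\!\{b,m\}\!\}_M\}\!\}_L+\sigma_{(123)}\{\!\{b,\{\!\{m,a\}\!\}_M\}\!\}_L+\sigma_{(132)}\{\!\{m,\{\!\{a,b\}\!\}\}\!\}_L=0$. $\mu_M$ is the bimodule action map $(A\otimes M)\oplus(M\otimes A)\to M$ and $\natural:M\to M_\natural$ the projection. $\{-,-\}_M$ induces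 a map $A_\natural\times M\to M$ and $\{-,-\}_{M,\natural}$ a map $A_\natural\times M_\natural\to M_\natural$. *)

(* Tensor products are represented by finite lists of pure
   tensors; equality in the tensor product is characterised by its universal
   property (equal images under every k-multilinear map into every k-module). *)
From HB Require Import structures.
From mathcomp Require Import all_boot all_algebra.
Set Implicit Arguments. Unset Strict Implicit. Unset Printing Implicit Defensive.
Import GRing.Theory.
Local Open Scope ring_scope.

Definition bilin2 (k : fieldType) (U V W : lmodType k) (f : U -> V -> W) : Prop :=
  (forall (c : k) x y z, f (c *: x + y) z = c *: f x z + f y z) /\
  (forall (c : k) x y z, f x (c *: y + z) = c *: f x y + f x z).

Definition trilin3 (k : fieldType) (U V X W : lmodType k) (f : U -> V -> X -> W) : Prop :=
  [/\ (forall (c : k) x x' y z, f (c *: x + x') y z = c *: f x y z + f x' y z),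
      (forall (c : k) x y y' z, f x (c *: y + y') z = c *: f x y z + f x y' z) &
      (forall (c : k) x y z z', f x y (c *: z + z') = c *: f x y z + f x y z')].

Definition tens2_eq (k : fieldType) (U V : lmodType k) (s t : seq (U * V)) : Prop :=
  forall (W : lmodType k) (f : U -> V -> W), bilin2 f ->
    \sum_(p <- s) f p.1 p.2 = \sum_(p <- t) f p.1 p.2.

Definition tens3_zero (k : fieldType) (U V X : lmodType k) (s : seq (U * V * X)) : Prop :=
  forall (W : lmodType k) (f : U -> V -> X -> W), trilin3 f ->
    \sum_(p <- s) f p.1.1 p.1.2 p.2 = 0.

Definition tscale (k : fieldType) (U V : lmodType k) (c : k) (s : seq (U * V)) :
  seq (U * V) := [seq (c *: p.1, p.2) | p <- s].

Definition tflip (U V : zmodType) (s : seq (U * V)) : seq (V * U) :=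
  [seq (- p.2, p.1) | p <- s].

(* {{f, -}}_L applied to the first tensor factor: (x (x) z) |-> f x (x) z *)
Definition tensL (U X Y Z : Type) (f : U -> seq (X * Y)) (s : seq (U * Z)) :
  seq (X * Y * Z) :=
  flatten [seq [seq (x.1, x.2, p.2) | x <- f p.1] | p <- s].

Definition sig123 (X Y Z : Type) (t : X * Y * Z) : Z * X * Y := (t.2, t.1.1, t.1.2).
Definition sig132 (X Y Z : Type) (t : X * Y * Z) : Y * Z * X := (t.1.2, t.2, t.1.1).

Definition double_bracket (k : fieldType) (A : algType k)
    (dbr : A -> A -> seq (A * A)) : Prop :=
  [/\ (forall (c : k) x y z,
         tens2_eq (dbr (c *: x + y) z) (tscale c (dbr x z) ++ dbr y z)),
      (forall (c : k) x y z,
         tens2_eq (dbr x (c *: y + z)) (tscale c (dbr x y) ++ dbr x z)),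
      (forall a b, tens2_eq (dbr a b) (tflip (dbr b a))) &
      (forall a b c, tens2_eq (dbr a (b * c))
         ([seq (b * p.1, p.2) | p <- dbr a c] ++ [seq (p.1, p.2 * c) | p <- dbr a b]))].

Definition double_jacobi (k : fieldType) (A : algType k)
    (dbr : A -> A -> seq (A * A)) : Prop :=
  forall a b c,
    tens3_zero (tensL (dbr a) (dbr b c)
                ++ map (@sig123 _ _ _) (tensL (dbr b) (dbr c a))
                ++ map (@sig132 _ _ _) (tensL (dbr c) (dbr a b))).

Definition double_poisson (k : fieldType) (A : algType k)
    (dbr : A -> A -> seq (A * A)) : Prop :=
  double_bracket dbr /\ double_jacobi dbr.

(* A-bimodule structure (k acting symmetrically) *)
Definition bimodule (k : fieldType) (A : algType k) (M : lmodType k)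
    (la : A -> M -> M) (ra : M -> A -> M) : Prop :=
  [/\ bilin2 la, bilin2 ra,
      (forall m, la 1 m = m /\ ra m 1 = m),
      (forall a b m, la (a * b) m = la a (la b m) /\ ra m (a * b) = ra (ra m a) b) &
      (forall a b m, la a (ra m b) = ra (la a m) b)].

Definition pair_eq (k : fieldType) (A M : lmodType k)
    (u v : seq (A * M) * seq (M * A)) : Prop :=
  tens2_eq u.1 v.1 /\ tens2_eq u.2 v.2.

(* {{m, b}}_M = - ({{b, m}}_M)°, as an element of (A (x) M) (+) (M (x) A) *)
Definition flipM (A M : zmodType) (u : seq (A * M) * seq (M * A)) :
  seq (A * M) * seq (M * A) := (tflip u.2, tflip u.1).

Definition double_poisson_bimodule (k : fieldType) (A : algType k) (M : lmodType k)
    (dbr : A -> A -> seq (A * A)) (la : A -> M -> M) (ra : M -> A -> M)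
    (dbrM : A -> M -> seq (A * M) * seq (M * A)) : Prop :=
  [/\
      (forall (c : k) x y m, pair_eq (dbrM (c *: x + y) m)
          (tscale c (dbrM x m).1 ++ (dbrM y m).1, tscale c (dbrM x m).2 ++ (dbrM y m).2))
      /\
      (forall (c : k) a m n, pair_eq (dbrM a (c *: m + n))
          (tscale c (dbrM a m).1 ++ (dbrM a n).1, tscale c (dbrM a m).2 ++ (dbrM a n).2)),
      (forall a b m, pair_eq (dbrM a (la b m))
          ([seq (p.1, la p.2 m) | p <- dbr a b] ++ [seq (b * p.1, p.2) | p <- (dbrM a m).1],
           [seq (la b p.1, p.2) | p <- (dbrM a m).2])),
      (forall a b m, pair_eq (dbrM a (ra m b))
          ([seq (p.1, ra p.2 b) | p <- (dbrM a m).1],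
           [seq (p.1, p.2 * b) | p <- (dbrM a m).2] ++ [seq (ra m p.1, p.2) | p <- dbr a b])),
      (forall a b m, pair_eq (dbrM (a * b) m)
          ([seq (p.1, la a p.2) | p <- (dbrM b m).1] ++ [seq (p.1 * b, p.2) | p <- (dbrM a m).1],
           [seq (p.1, a * p.2) | p <- (dbrM b m).2] ++ [seq (ra p.1 b, p.2) | p <- (dbrM a m).2])) &
      (* (iii): the three components in A(x)A(x)M, A(x)M(x)A, M(x)A(x)A vanish *)
      (forall a b m,
        let u := dbrM b m in
        let w := flipM (dbrM a m) in
        let xs := dbr a b in
        [/\ tens3_zero (tensL (dbr a) u.1
              ++ map (@sig123 _ _ _) (tensL (fun n => (dbrM b n).1) w.2)
              ++ map (@sig132 _ _ _) (tensL (fun n => (flipM (dbrM n m)).2) xs)),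
            tens3_zero (tensL (fun n => (dbrM a n).1) u.2
              ++ map (@sig123 _ _ _) (tensL (fun n => (dbrM b n).2) w.2)) &
            tens3_zero (tensL (fun n => (dbrM a n).2) u.2
              ++ map (@sig123 _ _ _) (tensL (dbr b) w.1)
              ++ map (@sig132 _ _ _) (tensL (fun n => (flipM (dbrM n m)).1) xs))])].

Definition mu (k : fieldType) (A : algType k) (s : seq (A * A)) : A :=
  \sum_(p <- s) p.1 * p.2.

Definition muM (k : fieldType) (A : algType k) (M : lmodType k)
    (la : A -> M -> M) (ra : M -> A -> M) (u : seq (A * M) * seq (M * A)) : M :=
  \sum_(p <- u.1) la p.1 p.2 + \sum_(p <- u.2) ra p.1 p.2.

Definition comm_span (R : nzRingType) (c : R) : Prop :=
  exists s : seq (R * R), c = \sum_(p <- s) (p.1 * p.2 - p.2 * p.1).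

Definition bimod_comm_span (k : fieldType) (A : algType k) (M : lmodType k)
    (la : A -> M -> M) (ra : M -> A -> M) (m : M) : Prop :=
  exists s : seq (A * M), m = \sum_(p <- s) (la p.1 p.2 - ra p.2 p.1).

(* act : A -> V -> V induces a Lie module structure of V/IV over the Lie algebra
   (A/IA, br): it is well defined on the quotients, bilinear, and
   {br a b, v} = {a, {b, v}} - {b, {a, v}}  (all modulo IV). *)
Definition lie_module_mod (k : fieldType) (A V : lmodType k)
    (IA : A -> Prop) (IV : V -> Prop)
    (br : A -> A -> A) (act : A -> V -> V) : Prop :=
  [/\ (forall c v, IA c -> IV (act c v)),
      (forall a v, IV v -> IV (act a v)),
      (forall (c : k) a b v, IV (act (c *: a + b) v - (c *: act a v + act b v))),
      (forall (c : k) a v w, IV (act a (c *: v + w) - (c *: act a v + act a w))) &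
      (forall a b v, IV (act (br a b) v - (act a (act b v) - act b (act a v))))].

From Pilot Require Import Defs.
From HB Require Import structures.
From mathcomp Require Import all_boot all_algebra ssrAC.
Set Implicit Arguments.
Unset Strict Implicit.
Unset Printing Implicit Defensive.
Import GRing.Theory.
Local Open Scope ring_scope.

(* Write {a, m} = mu_M {{a, m}} and {a, b} = mu {{a, b}}.  Axiom (i) makes
   {a, -} a derivation of the bimodule M along the derivation {a, -} of A, and
   axiom (ii) gives {xy, m} = {{y, m}}' x {{y, m}}'' + {{x, m}}' y {{x, m}}'',
   which is symmetric in x and y, so {-, m} kills [A, A].  Evaluating the three
   components of the Jacobi identity (iii) with the multiplication maps
   x y m |-> x y m, x m y |-> x m y and m x y |-> m x y and adding them gives
     {a, -} on the outer factors of {{b, m}} - {b, -} on the inner factors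
       of {{a, m}}  =  sum over {{a, b}} of {{p', m}}' p'' {{p', m}}''.
   Antisymmetrising in a and b and using the skew-symmetry of {{-, -}} turns
   this into {{a, b}, m} = {a, {b, m}} - {b, {a, m}}.  Finally, the derivation
   property shows that {a, -} preserves [A, M]. *)

Section LinearFunctions.
Variables (R : pzRingType) (U V W : lmodType R).

Section OneFunction.
Variables (f : U -> V) (f_lin : linear f).

Lemma linB x y : f (x - y) = f x - f y.
Proof. exact: (zmod_morphism_linear f_lin x y). Qed.

Lemma lin0 : f 0 = 0.
Proof. by rewrite -(subrr 0) linB subrr. Qed.

Lemma linN x : f (- x) = - f x.
Proof. by rewrite -sub0r linB lin0 sub0r. Qed.

Lemma linD x y : f (x + y) = f x + f y.
Proof. by have := f_lin 1 x y; rewrite !scale1r. Qed.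

Lemma linZ c x : f (c *: x) = c *: f x.
Proof. exact: (scalable_linear f_lin c x). Qed.

Lemma lin_sum (I : Type) (s : seq I) (F : I -> U) :
  f (\sum_(i <- s) F i) = \sum_(i <- s) f (F i).
Proof.
by elim: s => [|i s IH]; rewrite ?big_nil ?lin0 // !big_cons linD IH.
Qed.

End OneFunction.

Lemma linear_comp (g : U -> V) (h : V -> W) :
  linear g -> linear h -> linear (fun x => h (g x)).
Proof. by move=> gL hL c x y; rewrite gL hL. Qed.

Lemma linear_add (f g : U -> V) :
  linear f -> linear g -> linear (fun x => f x + g x).
Proof. by move=> fL gL c x y; rewrite fL gL scalerDr addrACA. Qed.

Lemma linear_sum_fun (I : Type) (s : seq I) (F : I -> U -> V) :
  (forall i, linear (F i)) -> linear (fun x => \sum_(i <- s) F i x).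
Proof.
move=> FL c x y; rewrite scaler_sumr -big_split.
by apply: eq_bigr => i _; apply: FL.
Qed.

End LinearFunctions.

Section TensorSums.

Lemma sum_tensL (X Y Z U : Type) (W : zmodType) (f : U -> seq (X * Y))
    (s : seq (U * Z)) (F : X -> Y -> Z -> W) :
  \sum_(t <- tensL f s) F t.1.1 t.1.2 t.2
  = \sum_(p <- s) \sum_(x <- f p.1) F x.1 x.2 p.2.
Proof. by rewrite big_flatten big_map; apply: eq_bigr => p _; rewrite big_map. Qed.

Lemma sum_sig123_tensL (X Y Z U : Type) (W : zmodType) (f : U -> seq (X * Y))
    (s : seq (U * Z)) (F : Z -> X -> Y -> W) :
  \sum_(t <- map (@sig123 _ _ _) (tensL f s)) F t.1.1 t.1.2 t.2
  = \sum_(p <- s) \sum_(x <- f p.1) F p.2 x.1 x.2.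
Proof. by rewrite big_map (sum_tensL f s (fun x y z => F z x y)). Qed.

Lemma sum_sig132_tensL (X Y Z U : Type) (W : zmodType) (f : U -> seq (X * Y))
    (s : seq (U * Z)) (F : Y -> Z -> X -> W) :
  \sum_(t <- map (@sig132 _ _ _) (tensL f s)) F t.1.1 t.1.2 t.2
  = \sum_(p <- s) \sum_(x <- f p.1) F x.2 p.2 x.1.
Proof. by rewrite big_map (sum_tensL f s (fun x y z => F y z x)). Qed.

Variables (k : fieldType) (U V X W : lmodType k).

Lemma bilin2_linl (f : U -> V -> W) y : bilin2 f -> linear (f ^~ y).
Proof. by case=> fL _ c x x'; apply: fL. Qed.

Lemma bilin2_linr (f : U -> V -> W) x : bilin2 f -> linear (f x).
Proof. by case=> _ fL c y y'; apply: fL. Qed.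

Lemma bilin2_linear (f : U -> V -> W) :
  (forall y, linear (f ^~ y)) -> (forall x, linear (f x)) -> bilin2 f.
Proof. by move=> fL fR; split=> c x y z; [apply: fL | apply: fR]. Qed.

Lemma trilin3_linear (f : U -> V -> X -> W) :
  (forall y z, linear (fun x => f x y z)) -> (forall x z, linear (fun y => f x y z)) ->
  (forall x y, linear (f x y)) -> trilin3 f.
Proof.
by move=> f1 f2 f3; split=> c *; [apply: (f1 _ _) | apply: (f2 _ _) | apply: f3].
Qed.

Lemma sum_tscale (f : U -> V -> W) c s : (forall y, linear (f ^~ y)) ->
  \sum_(p <- tscale c s) f p.1 p.2 = c *: \sum_(p <- s) f p.1 p.2.
Proof.
move=> fL; rewrite big_map scaler_sumr; apply: eq_bigr => p _.
exact: (linZ (fL _)).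
Qed.

Lemma sum_tflip (f : U -> V -> W) s : (forall y, linear (f ^~ y)) ->
  \sum_(p <- tflip s) f p.1 p.2 = - \sum_(p <- s) f p.2 p.1.
Proof.
move=> fL; rewrite big_map -sumrN; apply: eq_bigr => p _.
exact: (linN (fL _)).
Qed.

Lemma mulr_bilin (A : algType k) : bilin2 (fun x y : A => x * y).
Proof. by split=> c x y z; rewrite ?mulrDl ?mulrDr -?scalerAl -?scalerAr. Qed.

End TensorSums.

Definition pair_sum (X Y : Type) (W : zmodType) (f : X -> Y -> W) (g : Y -> X -> W)
    (u : seq (X * Y) * seq (Y * X)) : W :=
  \sum_(p <- u.1) f p.1 p.2 + \sum_(p <- u.2) g p.1 p.2.

Section PairSums.
Variables (k : fieldType) (X Y W : lmodType k).
Implicit Types (f : X -> Y -> W) (g : Y -> X -> W) (u v : seq (X * Y) * seq (Y * X)).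

Lemma pair_sum_eq f g u v :
  bilin2 f -> bilin2 g -> Defs.pair_eq u v -> pair_sum f g u = pair_sum f g v.
Proof. by move=> fB gB [E1 E2]; rewrite /pair_sum (E1 _ _ fB) (E2 _ _ gB). Qed.

Lemma pair_sum_scale_cat f g c u v :
  (forall y, linear (f ^~ y)) -> (forall x, linear (g ^~ x)) ->
  pair_sum f g (tscale c u.1 ++ v.1, tscale c u.2 ++ v.2)
  = c *: pair_sum f g u + pair_sum f g v.
Proof.
by move=> fL gL; rewrite /pair_sum !big_cat !sum_tscale // scalerDr addrACA.
Qed.

Lemma linear_pair_sum (Z : lmodType k) (h : W -> Z) f g u : linear h ->
  h (pair_sum f g u) = pair_sum (fun x y => h (f x y)) (fun y x => h (g y x)) u.
Proof. by move=> hL; rewrite /pair_sum (linD hL) !(lin_sum hL). Qed.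

End PairSums.

Lemma lie_module_mod_coarsen (k : fieldType) (A V : lmodType k) (IA : A -> Prop)
    (IV : V -> Prop) (br : A -> A -> A) (act : A -> V -> V) :
  lie_module_mod IA (fun v => v = 0) br act ->
  IV 0 -> (forall a v, IV v -> IV (act a v)) ->
  lie_module_mod IA IV br act.
Proof.
case=> act_IA _ actL actR act_br IV0 act_IV.
by split=> [c v /act_IA -> | a v /act_IV | c a b v | c a v w | a b v];
  rewrite ?actL ?actR ?act_br.
Qed.

Section Bimodule.
Variables (k : fieldType) (A : algType k) (M : lmodType k).
Variables (la : A -> M -> M) (ra : M -> A -> M).
Hypothesis bimod : bimodule la ra.

Lemma la_bilin : bilin2 la. Proof. by case: bimod. Qed.
Lemma ra_bilin : bilin2 ra. Proof. by case: bimod. Qed.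

Lemma la_linl m : linear (la ^~ m). Proof. exact: bilin2_linl la_bilin. Qed.
Lemma la_linr a : linear (la a). Proof. exact: bilin2_linr la_bilin. Qed.
Lemma ra_linl a : linear (ra ^~ a). Proof. exact: bilin2_linl ra_bilin. Qed.
Lemma ra_linr m : linear (ra m). Proof. exact: bilin2_linr ra_bilin. Qed.

Lemma laM a b m : la (a * b) m = la a (la b m).
Proof. by case: bimod => _ _ _ /(_ a b m) []. Qed.

Lemma raM a b m : ra m (a * b) = ra (ra m a) b.
Proof. by case: bimod => _ _ _ /(_ a b m) []. Qed.

Lemma la_ra a b m : la a (ra m b) = ra (la a m) b.
Proof. by case: bimod. Qed.

Lemma muME u : muM la ra u = pair_sum la ra u.
Proof. by []. Qed.

Lemma muM_pair_eq u v : Defs.pair_eq u v -> muM la ra u = muM la ra v.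
Proof. exact: pair_sum_eq la_bilin ra_bilin. Qed.

Lemma muM_scale_cat c u v :
  muM la ra (tscale c u.1 ++ v.1, tscale c u.2 ++ v.2)
  = c *: muM la ra u + muM la ra v.
Proof. exact: pair_sum_scale_cat la_linl ra_linl. Qed.

(* The element u' y u'' of M, for u in (A (x) M) (+) (M (x) A). *)
Definition muM_mid (y : A) (u : seq (A * M) * seq (M * A)) : M :=
  pair_sum (fun x n => la (x * y) n) (fun n x => ra (ra n y) x) u.

Lemma muM_mid_bilin y :
  bilin2 (fun x n => la (x * y) n) /\ bilin2 (fun n x => ra (ra n y) x).
Proof.
split; apply: bilin2_linear => z.
- exact: linear_comp (bilin2_linl y (mulr_bilin A)) (la_linl z).
- exact: la_linr.
- exact: linear_comp (ra_linl y) (ra_linl z).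
- exact: ra_linr.
Qed.

Lemma muM_mid_linear u : linear (muM_mid ^~ u).
Proof.
apply: linear_add; apply: linear_sum_fun => p.
  exact: linear_comp (bilin2_linr p.1 (mulr_bilin A)) (la_linl p.2).
exact: linear_comp (ra_linr p.1) (ra_linl p.2).
Qed.

Lemma trilin3_laM : trilin3 (fun (x y : A) (n : M) => la (x * y) n).
Proof.
apply: trilin3_linear => [y n|x n|x y].
- exact: linear_comp (bilin2_linl y (mulr_bilin A)) (la_linl n).
- exact: linear_comp (bilin2_linr x (mulr_bilin A)) (la_linl n).
- exact: la_linr.
Qed.

Lemma trilin3_la_ra : trilin3 (fun (x : A) (n : M) (y : A) => ra (la x n) y).
Proof.
apply: trilin3_linear => [n y|x y|x n].
- exact: linear_comp (la_linl n) (ra_linl y).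
- exact: linear_comp (la_linr x) (ra_linl y).
- exact: ra_linr.
Qed.

Lemma trilin3_raM : trilin3 (fun (n : M) (x y : A) => ra n (x * y)).
Proof.
apply: trilin3_linear => [x y|n y|n x].
- exact: ra_linl.
- exact: linear_comp (bilin2_linl y (mulr_bilin A)) (ra_linr n).
- exact: linear_comp (bilin2_linr x (mulr_bilin A)) (ra_linr n).
Qed.

Lemma bimod_comm_span0 : bimod_comm_span la ra 0.
Proof. by exists [::]; rewrite big_nil. Qed.

End Bimodule.

Section DoublePoissonBimodule.
Variables (k : fieldType) (A : algType k) (M : lmodType k).
Variables (dbr : A -> A -> seq (A * A)) (la : A -> M -> M) (ra : M -> A -> M).
Variable dbrM : A -> M -> seq (A * M) * seq (M * A).
Hypotheses (dpA : double_poisson dbr) (bimod : bimodule la ra).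
Hypothesis dpM : double_poisson_bimodule dbr la ra dbrM.

Local Notation br a b := (mu (dbr a b)).
Local Notation act a m := (muM la ra (dbrM a m)).

Lemma br_linr a : linear (fun b => br a b).
Proof.
case: dpA => -[_ dbrR _ _] _ c x y.
rewrite /mu (dbrR c a x y _ _ (mulr_bilin A)) big_cat sum_tscale // => z.
exact: bilin2_linl (mulr_bilin A).
Qed.

Lemma act_linl m : linear (fun a => act a m).
Proof.
case: dpM => -[dbrML _] _ _ _ _ c x y.
by rewrite (muM_pair_eq bimod (dbrML c x y m)) muM_scale_cat.
Qed.

Lemma act_linr a : linear (fun m => act a m).
Proof.
case: dpM => -[_ dbrMR] _ _ _ _ c x y.
by rewrite (muM_pair_eq bimod (dbrMR c a x y)) muM_scale_cat.
Qed.

Lemma act_la a x n : act a (la x n) = la (br a x) n + la x (act a n).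
Proof.
case: dpM => _ /(_ a x n) /(muM_pair_eq bimod) -> _ _ _.
rewrite /muM /= !big_cat !big_map /= /mu (lin_sum (la_linl bimod n)).
rewrite (linD (la_linr bimod x)) !(lin_sum (la_linr bimod x)) addrA.
by congr (_ + _ + _); apply: eq_bigr => p _; rewrite ?(laM bimod) ?(la_ra bimod).
Qed.

Lemma act_ra a x n : act a (ra n x) = ra (act a n) x + ra n (br a x).
Proof.
case: dpM => _ _ /(_ a x n) /(muM_pair_eq bimod) -> _ _.
rewrite /muM /= !big_cat !big_map /= /mu (lin_sum (ra_linr bimod n)).
rewrite (linD (ra_linl bimod x)) !(lin_sum (ra_linl bimod x)) addrA.
by congr (_ + _ + _); apply: eq_bigr => p _; rewrite ?(raM bimod) ?(la_ra bimod).
Qed.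

Lemma act_mul x y m :
  act (x * y) m = muM_mid la ra x (dbrM y m) + muM_mid la ra y (dbrM x m).
Proof.
case: dpM => _ _ _ /(_ x y m) /(muM_pair_eq bimod) -> _.
rewrite /muM /muM_mid /pair_sum /= !big_cat !big_map /= addrACA.
by congr (_ + _ + _); apply: eq_bigr => p _; rewrite ?(laM bimod) ?(raM bimod).
Qed.

Lemma act_comm_span c m : comm_span c -> act c m = 0.
Proof.
case=> s ->; rewrite (lin_sum (act_linl m)) big1 // => p _.
by rewrite (linB (act_linl m)) !act_mul [X in _ - X]addrC subrr.
Qed.

Lemma act_bimod_comm_span a m :
  bimod_comm_span la ra m -> bimod_comm_span la ra (act a m).
Proof.
case=> s ->; exists ([seq (br a p.1, p.2) | p <- s] ++ [seq (p.1, act a p.2) | p <- s]).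
rewrite (lin_sum (act_linr a)) big_cat /= !big_map -big_split; apply: eq_bigr => p _ /=.
by rewrite (linB (act_linr a)) act_la act_ra opprD [- ra _ _ - _]addrC addrACA.
Qed.

Definition act_outer a u :=
  pair_sum (fun x n => la (br a x) n) (fun n x => ra (act a n) x) u.

Definition act_inner a u :=
  pair_sum (fun x n => la x (act a n)) (fun n x => ra n (br a x)) u.

Lemma act_act a b m :
  act a (act b m) = act_outer a (dbrM b m) + act_inner a (dbrM b m).
Proof.
rewrite [muM _ _ (dbrM b m)]muME (linear_pair_sum _ _ _ (act_linr a)).
rewrite /act_outer /act_inner /pair_sum addrACA -!big_split.
by congr (_ + _); apply: eq_bigr => p _; rewrite ?act_la ?act_ra.
Qed.

(* The three components of axiom (iii), evaluated by the multiplication maps;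
   the arguments [- p.2] come from {{m, a}}_M = - {{a, m}}_M°. *)
Lemma jacobi_AAM a b m :
  \sum_(p <- (dbrM b m).1) la (br a p.1) p.2
  + \sum_(p <- (dbrM a m).1) la p.1 (\sum_(x <- (dbrM b (- p.2)).1) la x.1 x.2)
  = \sum_(p <- dbr a b) \sum_(q <- (dbrM p.1 m).1) la (q.1 * p.2) q.2.
Proof.
case: dpM => _ _ _ _ /(_ a b m) [/(_ _ _ (trilin3_laM bimod)) + _ _].
set g := fun (x y : A) (n : M) => la (x * y) n.
rewrite !big_cat /= (sum_tensL _ _ g) (sum_sig123_tensL _ _ g) (sum_sig132_tensL _ _ g).
rewrite /= !big_map /g /= => E.
apply/eqP; rewrite -subr_eq0; apply/eqP; rewrite -[RHS]E addrA -sumrN.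
congr (_ + _ + _); apply: eq_bigr => p _.
- by rewrite /mu (lin_sum (la_linl bimod _)).
- by rewrite (lin_sum (la_linr bimod _)); apply: eq_bigr => x _; rewrite (laM bimod).
- by rewrite big_map -sumrN; apply: eq_bigr => q _; rewrite (linN (la_linr bimod _)).
Qed.

Lemma jacobi_AMA a b m :
  \sum_(p <- (dbrM b m).2) ra (\sum_(x <- (dbrM a p.1).1) la x.1 x.2) p.2
  + \sum_(p <- (dbrM a m).1) la p.1 (\sum_(x <- (dbrM b (- p.2)).2) ra x.1 x.2)
  = 0.
Proof.
case: dpM => _ _ _ _ /(_ a b m) [_ /(_ _ _ (trilin3_la_ra bimod)) + _].
set g := fun (x : A) (n : M) (y : A) => ra (la x n) y.
rewrite !big_cat /= (sum_tensL _ _ g) (sum_sig123_tensL _ _ g) /= !big_map /g /= => E.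
rewrite -[RHS]E; congr (_ + _); apply: eq_bigr => p _.
- by rewrite (lin_sum (ra_linl bimod _)).
- by rewrite (lin_sum (la_linr bimod _)); apply: eq_bigr => x _; rewrite (la_ra bimod).
Qed.

Lemma jacobi_MAA a b m :
  \sum_(p <- (dbrM b m).2) ra (\sum_(x <- (dbrM a p.1).2) ra x.1 x.2) p.2
  + \sum_(p <- (dbrM a m).2) ra p.1 (br b (- p.2))
  = \sum_(p <- dbr a b) \sum_(q <- (dbrM p.1 m).2) ra (ra q.1 p.2) q.2.
Proof.
case: dpM => _ _ _ _ /(_ a b m) [_ _ /(_ _ _ (trilin3_raM bimod))].
set g := fun (n : M) (x y : A) => ra n (x * y).
rewrite !big_cat /= (sum_tensL _ _ g) (sum_sig123_tensL _ _ g) (sum_sig132_tensL _ _ g).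
rewrite /= !big_map /g /= => E.
apply/eqP; rewrite -subr_eq0; apply/eqP; rewrite -[RHS]E addrA -sumrN.
congr (_ + _ + _); apply: eq_bigr => p _.
- by rewrite (lin_sum (ra_linl bimod _)); apply: eq_bigr => x _; rewrite (raM bimod).
- by rewrite /mu (lin_sum (ra_linr bimod _)).
- rewrite big_map -sumrN; apply: eq_bigr => q _.
  by rewrite mulrN (linN (ra_linr bimod _)) (raM bimod).
Qed.

Lemma muM_jacobi a b m :
  act_outer a (dbrM b m) - act_inner b (dbrM a m)
  = \sum_(p <- dbr a b) muM_mid la ra p.2 (dbrM p.1 m).
Proof.
have inner_opp : act_inner b (dbrM a m)
    = - (\sum_(p <- (dbrM a m).1) la p.1 (act b (- p.2))
         + \sum_(p <- (dbrM a m).2) ra p.1 (br b (- p.2))).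
  rewrite opprD -!sumrN; congr (_ + _); apply: eq_bigr => p _.
    by rewrite (linN (act_linr b)) (linN (la_linr bimod _)) opprK.
  by rewrite (linN (br_linr b)) (linN (ra_linr bimod _)) opprK.
rewrite inner_opp opprK /act_outer /pair_sum /muM.
under [\sum_(p <- (dbrM b m).2) _]eq_bigr => p _ do rewrite (linD (ra_linl bimod _)).
under [\sum_(p <- (dbrM a m).1) _]eq_bigr => p _ do rewrite (linD (la_linr bimod _)).
rewrite /muM_mid /pair_sum !big_split /= !addrA (ACl ((1*4)*(3*6)*(2*5)))%AC /=.
by rewrite jacobi_AMA addr0 jacobi_AAM jacobi_MAA.
Qed.

Lemma muM_mid_dbrM_bilin m : bilin2 (fun x y => muM_mid la ra y (dbrM x m)).
Proof.
case: dpM => -[dbrML _] _ _ _ _.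
apply: bilin2_linear => [y c x x'|x]; last exact: muM_mid_linear.
have [fB gB] := muM_mid_bilin bimod y.
rewrite /muM_mid (pair_sum_eq fB gB (dbrML c x x' m)).
by rewrite pair_sum_scale_cat // => n; [exact: bilin2_linl n fB | exact: bilin2_linl n gB].
Qed.

Lemma act_br a b m : act (br a b) m = act a (act b m) - act b (act a m).
Proof.
have act_br_sum : act (br a b) m = \sum_(p <- dbr a b) muM_mid la ra p.2 (dbrM p.1 m)
    + \sum_(p <- dbr a b) muM_mid la ra p.1 (dbrM p.2 m).
  by rewrite (lin_sum (act_linl m)) -big_split; apply: eq_bigr => p _; rewrite act_mul addrC.
have skew_sum : \sum_(p <- dbr b a) muM_mid la ra p.2 (dbrM p.1 m)
    = - \sum_(p <- dbr a b) muM_mid la ra p.1 (dbrM p.2 m).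
  case: dpA => -[_ _ dbr_skew _] _.
  rewrite (dbr_skew b a _ _ (muM_mid_dbrM_bilin m)).
  rewrite (sum_tflip (f := fun x y => muM_mid la ra y (dbrM x m))) // => y.
  exact: bilin2_linl (muM_mid_dbrM_bilin m).
rewrite act_br_sum -muM_jacobi -[X in _ + X]opprK -skew_sum -muM_jacobi !act_act.
by rewrite opprB [LHS]addrACA [- act_inner _ _ + _]addrC [in RHS]opprD.
Qed.

Lemma lie_module_act :
  lie_module_mod (@comm_span A) (fun m : M => m = 0)
    (fun a b => br a b) (fun a m => act a m).
Proof.
split=> [c m /act_comm_span // | a m -> | c a b m | c a m n | a b m].
- exact: lin0 (act_linr a).
- by rewrite act_linl subrr.
- by rewrite act_linr subrr.
- by rewrite act_br subrr.
Qed.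

End DoublePoissonBimodule.

Theorem proposition3p10 (k : fieldType) (A : algType k) (M : lmodType k)
    (dbr : A -> A -> seq (A * A)) (la : A -> M -> M) (ra : M -> A -> M)
    (dbrM : A -> M -> seq (A * M) * seq (M * A)) :
  double_poisson dbr ->
  bimodule la ra ->
  double_poisson_bimodule dbr la ra dbrM ->
  lie_module_mod (@comm_span A) (fun m : M => m = 0)
    (fun a b => mu (dbr a b)) (fun a m => muM la ra (dbrM a m))
  /\
  lie_module_mod (@comm_span A) (bimod_comm_span la ra)
    (fun a b => mu (dbr a b)) (fun a m => muM la ra (dbrM a m)).
Proof.
move=> dpA bimod dpM; have lie_mod := lie_module_act dpA bimod dpM.
split=> //; apply: lie_module_mod_coarsen lie_mod (bimod_comm_span0 la ra) _.
exact: act_bimod_comm_span bimod dpM.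
Qed.
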